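(* For every $n\equiv 1 \pmod{16}$ with $n\geq 17$, there exists an almost 2-perfect 8-cycle system of order $n$.
   Context: An 8-cycle system of order $n$ is a collection of pairwise edge-disjoint 8-cycles partitioning the edge set of $K_n$. For an 8-cycle $C$, an inside 8-cycle of $C$ is an 8-cycle on the same vertex set as $C$ sharing no edge with $C$. An 8-cycle system $\mathcal{C}$ is almost 2-perfect if one can choose, for each $C\in\mathcal{C}$, an inside 8-cycle $C'$ of $C$ so that the chosen cycles again form an 8-cycle system of order $n$. *)

(* Vertices of K_n are 'I_n; an edge is a 2-element set of
   vertices; a cycle is represented by its edge set. *)
From HB Require Import structures.
From mathcomp Require Import all_boot.
Set Implicit Arguments. Unset Strict Implicit. Unset Printing Implicit Defensive.

Section Cycles.
Variable n : nat.
Local Notation V := 'I_n.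

Definition Kn_edges : {set {set V}} := [set e : {set V} | #|e| == 2].

Definition walk_edges (c : 8.-tuple V) : {set {set V}} :=
  [set [set tnth c i; tnth c (ordS i)] | i : 'I_8].

Definition is_8cycle (C : {set {set V}}) : Prop :=
  exists c : 8.-tuple V, uniq c /\ C = walk_edges c.

Definition cycle_vertices (C : {set {set V}}) : {set V} := cover C.

Definition is_8cycle_system (S : {set {set {set V}}}) : Prop :=
  (forall C, C \in S -> is_8cycle C) /\ partition S Kn_edges.

Definition inside_8cycle (C C' : {set {set V}}) : Prop :=
  is_8cycle C' /\ cycle_vertices C' = cycle_vertices C /\ C :&: C' = set0.

Definition almost_2_perfect (S : {set {set {set V}}}) : Prop :=
  is_8cycle_system S /\
  exists f : {set {set V}} -> {set {set V}},
    (forall C, C \in S -> inside_8cycle C (f C)) /\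
    {in S &, injective f} /\
    is_8cycle_system [set f C | C in S].

End Cycles.

From mathcomp Require Import all_boot all_algebra zify.
Set Implicit Arguments. Unset Strict Implicit. Unset Printing Implicit Defensive.
Import GRing.Theory.

(* Work in Z_n with n = 16k + 1.  For each j < k take a base block B_j of 8
   points and two cyclic orders p, q of its points sharing no edge, such that
   the differences of the p-cycles (and likewise of the q-cycles) hit every
   nonzero residue exactly once up to sign.  Developing the p-cycles and the
   q-cycles cyclically then gives two 8-cycle systems, and the translate
   B_j + i ordered by q is an inside cycle of B_j + i ordered by p.  The
   blocks B_j are built from j and its cyclic successor modulo k, which needs
   k >= 2; the case n = 17 is handled by an explicit pair of base cycles. *)

Ltac ord8_cases r := case: r => [[|[|[|[|[|[|[|[|//]]]]]]]] ?].

Lemma eq_set2 (T : finType) (a b a' b' : T) :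
  [set a; b] = [set a'; b'] -> (a = a' /\ b = b') \/ (a = b' /\ b = a').
Proof.
move=> E.
have /set2P[] : a \in [set a'; b'] by rewrite -E set21.
- have /set2P[] : b \in [set a'; b'] by rewrite -E set22.
  + have /set2P[] : b' \in [set a; b] by rewrite E set22.
    * by move=> -> -> ->; left.
    * by move=> -> -> ->; left.
  + by move=> -> ->; left.
- have /set2P[] : b \in [set a'; b'] by rewrite -E set22.
  + by move=> -> ->; right.
  + have /set2P[] : a' \in [set a; b] by rewrite E set21.
    * by move=> -> -> ->; right.
    * by move=> -> -> ->; right.
Qed.

Lemma ordS_neq n (i : 'I_n) : 1 < n -> ordS i != i.
Proof.
move=> n_gt1; rewrite -val_eqE /=.
have /orP[/eqP Ei|lt_i] : (i.+1 == n) || (i.+1 < n) by rewrite -leq_eqVlt.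
- have -> : i.+1 %% n = 0 by rewrite Ei modnn.
  by rewrite eq_sym -lt0n; lia.
- by rewrite modn_small //; lia.
Qed.

Lemma uniq_tnth_imsetT (p : 8.-tuple 'I_8) :
  uniq p -> [set tnth p r | r : 'I_8] = setT.
Proof.
move=> p_uniq; apply/eqP.
rewrite eqEcard subsetT cardsT card_imset ?card_ord //; exact/tuple_uniqP.
Qed.

Lemma inZpD n (a b : nat) : inZp (a + b) = (inZp a + inZp b)%R :> 'I_n.+1.
Proof. by apply: val_inj; rewrite /= modnDm. Qed.

Lemma inZp_inj n (a b : nat) :
  inZp a = inZp b :> 'I_n.+1 -> a < n.+1 -> b < n.+1 -> a = b.
Proof.
by move=> /(congr1 val) /= E a_lt b_lt; rewrite -(modn_small a_lt) E modn_small.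
Qed.

Definition signed (V : zmodType) (b : bool) (x : V) : V := if b then x else (- x)%R.

Lemma signed_signed (V : zmodType) b c (x : V) :
  signed b (signed c x) = signed (b == c) x.
Proof. by case: b; case: c; rewrite /signed ?opprK. Qed.

Lemma signed_eq0 (V : zmodType) b (x : V) : (signed b x == 0)%R = (x == 0)%R.
Proof. by case: b; rewrite /signed ?oppr_eq0. Qed.

Lemma signed_inZp_inj (M : nat) (b b' : bool) (D D' : nat) :
  0 < D -> 0 < D' -> 2 * D <= M -> 2 * D' <= M ->
  signed b (inZp D : 'I_M.+1) = signed b' (inZp D') -> b = b' /\ D = D'.
Proof.
move=> D_gt0 D'_gt0 D_le D'_le /(congr1 val).
have [DM D'M] : D < M.+1 /\ D' < M.+1 by lia.
case: b; case: b' => /=; rewrite ?(modn_small DM) ?(modn_small D'M).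
- by split.
- by rewrite modn_small; lia.
- by rewrite modn_small; lia.
- by rewrite !modn_small; lia.
Qed.

Definition share_no_edge (T : eqType) (c d : 8.-tuple T) : bool :=
  [forall r, forall r', (tnth c r, tnth c (ordS r)) \notin
     [:: (tnth d r', tnth d (ordS r')); (tnth d (ordS r'), tnth d r')]].

Section Walks.
Variable n : nat.

Lemma walk_edges_map m (h : 'I_n -> 'I_m) (c : 8.-tuple 'I_n) :
  walk_edges (map_tuple h c) = [set h @: e | e : {set 'I_n} in walk_edges c].
Proof.
rewrite /walk_edges -imset_comp; apply: eq_imset => r /=.
by rewrite !tnth_map imsetU1 imset_set1.
Qed.

Lemma cover_walk_edges (c : 8.-tuple 'I_n) :
  cycle_vertices (walk_edges c) = [set tnth c r | r : 'I_8].
Proof.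
apply/setP => x; apply/bigcupP/imsetP.
- case=> _ /imsetP[r _ ->] /set2P[->|->]; first by exists r.
  by exists (ordS r).
- case=> r _ ->; exists [set tnth c r; tnth c (ordS r)]; last by rewrite set21.
  by apply/imsetP; exists r.
Qed.

Lemma walk_edges_disjoint (c d : 8.-tuple 'I_n) :
  share_no_edge c d -> walk_edges c :&: walk_edges d = set0.
Proof.
move=> /forallP no_edge; apply/setP => e; rewrite inE in_set0.
apply/negP => /andP[/imsetP[r _ ->] /imsetP[r' _ /eq_set2 E]].
have /forallP/(_ r') := no_edge r.
by case: E => [[-> ->]|[-> ->]]; rewrite !inE eqxx ?orbT.
Qed.

End Walks.

Section Development.
Variables (m : nat) (L : finType) (vert : L -> 'I_8 -> 'I_m.+1).
Hypothesis vert_inj : forall l, injective (vert l).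
Hypothesis order_eq : m = (16 * #|L|)%N.
Local Notation G := 'I_m.+1.
Local Open Scope ring_scope.

Definition translate (i : G) l (s : 'I_8) : G := i + vert l s.

Lemma translate_inj i l : injective (translate i l).
Proof. by move=> s s' /addrI /vert_inj. Qed.

Definition dev (p : 8.-tuple 'I_8) i l := walk_edges (map_tuple (translate i l) p).

Definition diff (p : 8.-tuple 'I_8) l r := vert l (tnth p (ordS r)) - vert l (tnth p r).

Definition sdiff (p : 8.-tuple 'I_8) (x : L * 'I_8 * bool) :=
  let: (l, r, b) := x in signed b (diff p l r).

Section BaseCycles.
Variable p : 8.-tuple 'I_8.
Hypothesis p_uniq : uniq p.
Hypothesis sdiff_inj : injective (sdiff p).

Definition dev_edge i l r :=
  [set translate i l (tnth p r); translate i l (tnth p (ordS r))].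

Lemma dev_edgeP e i l : reflect (exists r, e = dev_edge i l r) (e \in dev p i l).
Proof.
apply: (iffP imsetP) => [[r _ ->]|[r ->]]; exists r => //.
all: by rewrite !tnth_map.
Qed.

Lemma translate_ordS i l r :
  translate i l (tnth p (ordS r)) = translate i l (tnth p r) + diff p l r.
Proof. by rewrite /translate -addrA subrKC. Qed.

Lemma diff_neq0 l r : diff p l r != 0.
Proof.
rewrite subr_eq0; apply/negP => /eqP /vert_inj /(tuple_uniqP _ p_uniq) /eqP.
by apply/negP; apply: ordS_neq.
Qed.

Lemma dev_edge_inj i l r i' l' r' :
  dev_edge i l r = dev_edge i' l' r' -> (i, l, r) = (i', l', r').
Proof.
case/eq_set2 => -[E1 E2]; rewrite !translate_ordS in E2.
- rewrite E1 in E2.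
  have [El Er] := sdiff_inj (x1 := (l, r, true)) (x2 := (l', r', true)) (addrI _ E2).
  subst l' r'.
  by rewrite (addIr _ E1).
- rewrite E1 translate_ordS -addrA -[RHS]addr0 in E2.
  have /eqP := addrI _ E2; rewrite addrC addr_eq0 => /eqP E.
  by have := sdiff_inj (x1 := (l, r, true)) (x2 := (l', r', false)) E.
Qed.

Lemma dev_inj i l i' l' : dev p i l = dev p i' l' -> (i, l) = (i', l').
Proof.
move=> E; have /dev_edgeP[r] : dev_edge i l ord0 \in dev p i' l'.
  by rewrite -E; apply/dev_edgeP; exists ord0.
by move/dev_edge_inj => [-> ->].
Qed.

Lemma dev_8cycle i l : is_8cycle (dev p i l).
Proof.
exists (map_tuple (translate i l) p); split => //.
by rewrite map_inj_uniq //; apply: translate_inj.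
Qed.

(* The signed differences inject into the nonzero residues, and both sets have
   16 #|L| elements. *)
Lemma sdiff_onto g : g != 0 -> exists x, sdiff p x = g.
Proof.
have sub : sdiff p @: setT \subset [set~ 0].
  apply/subsetP => _ /imsetP[[[l r] b] _ ->].
  by rewrite !inE signed_eq0 diff_neq0.
have card_le : (#|[set~ 0%R : G]| <= #|sdiff p @: setT|)%N.
  rewrite cardsC1 card_imset // cardsT !card_prod card_ord card_bool order_eq.
  by rewrite card_ord; lia.
move=> g_neq0; have : g \in sdiff p @: setT.
  have -> : sdiff p @: setT = [set~ 0] by apply/eqP; rewrite eqEcard sub card_le.
  by rewrite !inE.
by case/imsetP => x _ ->; exists x.
Qed.

Lemma dev_edge_Kn i l r : dev_edge i l r \in Kn_edges m.+1.
Proof.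
rewrite inE cards2 translate_ordS -subr_eq0 opprD addrA subrr add0r.
by rewrite oppr_eq0 diff_neq0.
Qed.

Lemma Kn_edge_dev e : e \in Kn_edges m.+1 -> exists i l r, e = dev_edge i l r.
Proof.
rewrite inE => /cards2P[x [y [x_neq_y ->]]].
have [[[l r] b] Exy] : exists x0, sdiff p x0 = y - x.
  by apply: sdiff_onto; rewrite subr_eq0 eq_sym.
have [u [v [-> Euv]]] : exists u v, [set x; y] = [set u; v] /\ diff p l r = v - u.
  case: b Exy => /= E; first by exists x, y.
  by exists y, x; split; [rewrite setUC | rewrite -[LHS]opprK E opprB].
exists (u - vert l (tnth p r)), l, r.
by rewrite /dev_edge translate_ordS Euv /translate subrK subrKC.
Qed.

Definition dev_system := [set dev p x.1 x.2 | x : G * L].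

Lemma dev_8cycle_system : is_8cycle_system dev_system.
Proof.
split; first by move=> _ /imsetP[x _ ->]; apply: dev_8cycle.
apply/and3P; split.
- apply/eqP/setP => e; apply/bigcupP/idP.
  + by case=> _ /imsetP[x _ ->] /dev_edgeP[r ->]; apply: dev_edge_Kn.
  + case/Kn_edge_dev => i [l [r ->]]; exists (dev p i l).
      by apply/imsetP; exists (i, l).
    by apply/dev_edgeP; exists r.
- apply/trivIsetP => _ _ /imsetP[x _ ->] /imsetP[y _ ->] dev_neq.
  rewrite -setI_eq0; apply/eqP/setP => e; rewrite inE in_set0.
  apply/negP => /andP[/dev_edgeP[r ->] /dev_edgeP[r' /dev_edge_inj[Ei El _]]].
  by move: dev_neq; rewrite Ei El eqxx.
- apply/imsetP => -[x _ E].
  have : dev_edge x.1 x.2 ord0 \in dev p x.1 x.2 by apply/dev_edgeP; exists ord0.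
  by rewrite -E in_set0.
Qed.

Lemma dev_vertices i l : cycle_vertices (dev p i l) = translate i l @: setT.
Proof.
rewrite cover_walk_edges -(uniq_tnth_imsetT p_uniq) -imset_comp.
by apply: eq_imset => r; rewrite tnth_map.
Qed.

End BaseCycles.

Section InsideCycles.
Variables p q : 8.-tuple 'I_8.
Hypotheses (p_uniq : uniq p) (q_uniq : uniq q).
Hypotheses (sdiff_p_inj : injective (sdiff p)) (sdiff_q_inj : injective (sdiff q)).
Hypothesis pq_disjoint : share_no_edge p q.

Lemma dev_inside i l : inside_8cycle (dev p i l) (dev q i l).
Proof.
split; first exact: dev_8cycle.
split; first by rewrite !dev_vertices.
rewrite /dev !walk_edges_map -imsetI; last first.
  by move=> e e' _ _; apply/imset_inj/translate_inj.
by rewrite walk_edges_disjoint // imset0.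
Qed.

Definition inside_choice (C : {set {set G}}) : {set {set G}} :=
  if [pick x : G * L | C == dev p x.1 x.2] is Some x then dev q x.1 x.2 else C.

Lemma inside_choiceE i l : inside_choice (dev p i l) = dev q i l.
Proof.
rewrite /inside_choice; case: pickP => [x /eqP/dev_inj E | /(_ (i, l))].
- by case: (E sdiff_p_inj) => <- <-.
- by rewrite eqxx.
Qed.

Lemma dev_almost_2_perfect : almost_2_perfect (dev_system p).
Proof.
split; first exact: dev_8cycle_system.
exists inside_choice; split; [|split].
- by move=> _ /imsetP[x _ ->]; rewrite inside_choiceE; apply: dev_inside.
- move=> _ _ /imsetP[x _ ->] /imsetP[y _ ->]; rewrite !inside_choiceE.
  by move/dev_inj => /(_ sdiff_q_inj) [-> ->].
- have -> : inside_choice @: dev_system p = dev_system q.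
    by rewrite -imset_comp; apply: eq_imset => x; apply: inside_choiceE.
  exact: dev_8cycle_system.
Qed.

End InsideCycles.
End Development.

Section Blocks.
Variable k : nat.
Local Notation G := 'I_(16 * k).+1.

Definition block_point (a b : nat) (s : 'I_8) : nat :=
  nth 0 [:: 0; 1; 8 * a + 2; 8 * a + 4; 8 * b + 2; 8 * b + 4;
            8 * a + 8 * b + 9; 8 * a + 8 * b + 10] s.

Definition vertB (j : 'I_k) (s : 'I_8) : G := inZp (block_point j (ordS j) s).

Lemma block_point_lt a b s : a < k -> b < k -> block_point a b s < (16 * k).+1.
Proof. by ord8_cases s; rewrite /block_point /=; lia. Qed.

Lemma block_point_inj a b : a != b -> injective (block_point a b).
Proof.
move=> /eqP a_neq_b s s' E; apply: val_inj; move: E.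
by ord8_cases s; ord8_cases s'; rewrite /block_point /=; lia.
Qed.

Lemma vertB_inj : 1 < k -> forall j : 'I_k, injective (vertB j).
Proof.
move=> k_gt1 j; have [jk j'k] := (ltn_ord j, ltn_ord (ordS j)).
move=> s s' /inZp_inj E; apply: (block_point_inj _ (E _ _)).
- by rewrite val_eqE eq_sym ordS_neq.
- exact: block_point_lt.
- exact: block_point_lt.
Qed.

Section BlockOrder.
Variables (p : 8.-tuple 'I_8) (sg ty : 'I_8 -> bool) (ofs : 'I_8 -> nat).

(* Along [p], edge [r] of block [j] climbs by [gap j (ordS j) r] if [sg r] and
   descends by it otherwise; [ty r] selects which of [j] and [j + 1 mod k]
   enters the length.  Over all blocks and edges these lengths tile [1, 8k]. *)
Definition gap (a b : nat) r := 8 * (if ty r then a else b) + ofs r.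

Definition steps_by_gap := forall a b r,
  if sg r then block_point a b (tnth p (ordS r)) = block_point a b (tnth p r) + gap a b r
  else block_point a b (tnth p r) = block_point a b (tnth p (ordS r)) + gap a b r.

Hypothesis ofs_range : forall r, 0 < ofs r <= 8.
Hypothesis ofs_inj : injective ofs.
Hypothesis block_step : steps_by_gap.

Lemma diff_vertB j r : diff vertB p j r = signed (sg r) (inZp (gap j (ordS j) r)).
Proof.
have := block_step j (ordS j) r; rewrite /diff /vertB /signed.
case: (sg r) => ->; rewrite inZpD.
- by rewrite addrAC subrr add0r.
- by rewrite opprD addrA subrr add0r.
Qed.

Lemma gap_inj (j j' : 'I_k) r r' :
  gap j (ordS j) r = gap j' (ordS j') r' -> j = j' /\ r = r'.
Proof.
have := ltn_ord j; have := ltn_ord j'; have := ltn_ord (ordS j).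
have := ltn_ord (ordS j'); have := ofs_range r; have := ofs_range r'.
rewrite /gap => ? ? ? ? ? ? E.
have /ofs_inj Er : ofs r = ofs r' by move: E; case: (ty r); case: (ty r'); lia.
subst r'; split => //; move: E; case: (ty r) => E.
- by apply: ord_inj; lia.
- by apply: ordS_inj; apply: ord_inj; lia.
Qed.

Lemma sdiff_vertB_inj : injective (sdiff vertB p).
Proof.
have gap_bounds (j : 'I_k) r : 0 < gap j (ordS j) r /\ 2 * gap j (ordS j) r <= 16 * k.
  have := ltn_ord j; have := ltn_ord (ordS j); have := ofs_range r.
  by rewrite /gap; case: (ty r); lia.
move=> [[j r] b] [[j' r'] b']; rewrite /= !diff_vertB !signed_signed.
have [? ?] := gap_bounds j r; have [? ?] := gap_bounds j' r'.
case/signed_inZp_inj => // Eb /gap_inj[Ej Er]; subst j' r'.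
by move: Eb; case: b; case: b'; case: (sg r).
Qed.

End BlockOrder.
End Blocks.

Definition ord8 (i : nat) : 'I_8 := inZp i.

Definition pk : 8.-tuple 'I_8 :=
  [tuple ord8 0; ord8 2; ord8 1; ord8 3; ord8 7; ord8 4; ord8 6; ord8 5].
Definition sg_pk (r : 'I_8) :=
  nth false [:: true; false; true; true; false; true; false; false] r.
Definition ty_pk (r : 'I_8) :=
  nth false [:: true; true; true; false; true; true; true; false] r.
Definition ofs_pk (r : 'I_8) :=
  nth 0 [:: 2; 1; 3; 6; 8; 7; 5; 4] r.

Definition qk : 8.-tuple 'I_8 :=
  [tuple ord8 0; ord8 3; ord8 6; ord8 2; ord8 7; ord8 5; ord8 1; ord8 4].
Definition sg_qk (r : 'I_8) :=
  nth false [:: true; true; false; true; false; false; true; false] r.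
Definition ty_qk (r : 'I_8) :=
  nth false [:: true; false; false; false; true; false; false; false] r.
Definition ofs_qk (r : 'I_8) :=
  nth 0 [:: 4; 5; 7; 8; 6; 3; 1; 2] r.

Lemma steps_pk : steps_by_gap pk sg_pk ty_pk ofs_pk.
Proof.
by move=> a b r; ord8_cases r; rewrite /block_point /gap /sg_pk /ty_pk /ofs_pk /=; lia.
Qed.

Lemma steps_qk : steps_by_gap qk sg_qk ty_qk ofs_qk.
Proof.
by move=> a b r; ord8_cases r; rewrite /block_point /gap /sg_qk /ty_qk /ofs_qk /=; lia.
Qed.

Lemma ofs_pk_range r : 0 < ofs_pk r <= 8. Proof. by ord8_cases r. Qed.
Lemma ofs_qk_range r : 0 < ofs_qk r <= 8. Proof. by ord8_cases r. Qed.

Lemma ofs_pk_inj : injective ofs_pk.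
Proof. by move=> r r' E; apply: val_inj; move: E; ord8_cases r; ord8_cases r'. Qed.

Lemma ofs_qk_inj : injective ofs_qk.
Proof. by move=> r r' E; apply: val_inj; move: E; ord8_cases r; ord8_cases r'. Qed.

Lemma pk_qk_share_no_edge : share_no_edge pk qk.
Proof. by apply/forallP => r; apply/forallP => r'; ord8_cases r; ord8_cases r'. Qed.

Lemma almost_2_perfect_16k1 k : 1 < k ->
  exists S : {set {set {set 'I_(16 * k).+1}}}, almost_2_perfect S.
Proof.
move=> k_gt1; have order_eq : 16 * k = 16 * #|'I_k| by rewrite card_ord.
exists (dev_system (@vertB k) pk).
apply: (dev_almost_2_perfect (vertB_inj k_gt1) order_eq (q := qk)) => //.
- exact: (sdiff_vertB_inj ofs_pk_range ofs_pk_inj steps_pk).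
- exact: (sdiff_vertB_inj ofs_qk_range ofs_qk_inj steps_qk).
- exact: pk_qk_share_no_edge.
Qed.

Definition v17 (_ : unit) (s : 'I_8) : 'I_17 :=
  inZp (nth 0 [:: 0; 1; 3; 6; 10; 5; 16; 9] s).
Definition p17 : 8.-tuple 'I_8 :=
  [tuple ord8 0; ord8 1; ord8 2; ord8 3; ord8 4; ord8 5; ord8 6; ord8 7].
Definition q17 : 8.-tuple 'I_8 :=
  [tuple ord8 0; ord8 5; ord8 3; ord8 7; ord8 2; ord8 6; ord8 1; ord8 4].

Lemma v17_inj l : injective (v17 l).
Proof.
move=> s s' /(congr1 val) E; apply: val_inj; move: E.
by ord8_cases s; ord8_cases s'; move=> /eqP; vm_compute.
Qed.

Lemma sdiff17_inj : injective (sdiff v17 p17) /\ injective (sdiff v17 q17).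
Proof.
split=> -[[[] r] b] [[[] r'] b'] /(congr1 val) E.
all: suff [/val_inj -> ->] : (nat_of_ord r, b) = (nat_of_ord r', b') by [].
all: by move: E; ord8_cases r; ord8_cases r'; case: b; case: b' => /eqP; vm_compute.
Qed.

Lemma p17_q17_share_no_edge : share_no_edge p17 q17.
Proof. by apply/forallP => r; apply/forallP => r'; ord8_cases r; ord8_cases r'. Qed.

Lemma almost_2_perfect_17 : exists S : {set {set {set 'I_17}}}, almost_2_perfect S.
Proof.
have order_eq : 16 = 16 * #|{: unit}| by rewrite card_unit.
exists (dev_system v17 p17).
apply: (dev_almost_2_perfect v17_inj order_eq (q := q17)) => //.
- exact: sdiff17_inj.1.
- exact: sdiff17_inj.2.
- exact: p17_q17_share_no_edge.
Qed.

Theorem lemma3p1 (n : nat) :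
  n %% 16 = 1 -> 17 <= n ->
  exists S : {set {set {set 'I_n}}}, almost_2_perfect S.
Proof.
move=> n_mod n_ge17; have -> : n = (16 * (n %/ 16)).+1.
  by have := divn_eq n 16; lia.
have [k_le1|k_gt1] := leqP (n %/ 16) 1.
- have -> : n %/ 16 = 1 by lia.
  exact: almost_2_perfect_17.
- exact: almost_2_perfect_16k1.
Qed.
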